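(* In the setting of the context (with $\mathcal S_t\subset\mathcal S_{t+1}$ for all $t$), for every $t$: (a) $\mathcal D_t=\{\{s,q\}\subset\{1,\dots,t\}: s\neq q,\ s\notin\mathcal S_q,\ q\notin\mathcal S_s\}$; (b) $\mathcal B_t=\{\{s,q\}\subset\mathcal S_t: s\neq q,\ s\notin\mathcal S_q,\ q\notin\mathcal S_s\}$.
   Context: Delayed feedback protocol over rounds $t=1,\dots,T$: at each round a point is played and its feedback (indexed by the timestamp $t$) is revealed later. $\mathcal S_t\subset\{1,\dots,t-1\}$ is the set of timestamps of feedback available to the active agent at time $t$, and it is assumed that $\mathcal S_t\subset\mathcal S_{t+1}$ for all $t$. Let $\mathcal U_t=\{1,\dots,t-1\}\setminus\mathcal S_t$. Arrival order: $\sigma$ is a permutation of $\{1,\dots,T\}$ such that $\mathcal S_t=\{\sigma(1),\dots,\sigma(|\mathcal S_t|)\}$ for all $t$; $\mathcal R_t=\{\sigma(1),\dots,\sigma(\sigma^{-1}(t)-1)\}$. Define the sets of unordered pairs of distinct elements $\mathcal D_t=\{\{s,q\}: s\in\{1,\dots,t\},\ q\in\mathcal U_s\}$ and $\mathcal B_t=\{\{s,q\}: s\in\mathcal S_t,\ q\in\mathcal R_s\setminus\mathcal S_s\}$. *)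

(* Timestamps 1..T are represented as elements of 'I_T.+1
   (the element 0 is unused). Unordered pairs {s,q} are 2-element sets
   [set s; q] : {set 'I_T.+1}. *)
From mathcomp Require Import all_boot all_fingroup.
Set Implicit Arguments. Unset Strict Implicit. Unset Printing Implicit Defensive.

Section Delayed.
Variable T : nat.
Local Notation tm := 'I_T.+1.

Definition upto (t : nat) : {set tm} := [set s : tm | 1 <= s <= t].

Definition Uset (S : tm -> {set tm}) (t : tm) : {set tm} :=
  [set q : tm | (1 <= q < t) && (q \notin S t)].

Definition Rset (sigma : {perm tm}) (t : tm) : {set tm} :=
  [set sigma i | i : tm & 1 <= i < (sigma^-1)%g t].

(* sigma is a permutation of {1..T}: a permutation of 'I_T.+1 fixing 0 *)
Definition perm_of_1T (sigma : {perm tm}) : Prop := sigma ord0 = ord0.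

Definition arrival_order (S : tm -> {set tm}) (sigma : {perm tm}) : Prop :=
  forall t : tm, 1 <= t ->
    S t = [set sigma i | i : tm & 1 <= i <= #|S t|].

Definition Dset (S : tm -> {set tm}) (t : tm) : {set {set tm}} :=
  [set [set s; q] | s in upto t, q in Uset S s].

Definition Bset (S : tm -> {set tm}) (sigma : {perm tm}) (t : tm)
  : {set {set tm}} :=
  [set [set s; q] | s in S t, q in Rset sigma s :\: S s].

Definition indep_pairs (S : tm -> {set tm}) (A : {set tm}) : {set {set tm}} :=
  [set [set s; q] | s in A,
     q in [set q in A | (q != s) && (s \notin S q) && (q \notin S s)]].

End Delayed.

(* Both families consist of the pairs {s, q} enumerated from their later
   endpoint s for a ranking r -- the timestamp itself for D, the arrival
   position sigma^-1 for B -- subject to q \notin S s.  For both rankings S q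
   only contains points ranked below q, so s \notin S q holds automatically
   for such a pair; conversely every independent pair is enumerated from
   whichever endpoint has the larger rank. *)
From mathcomp Require Import all_boot all_fingroup.

Set Implicit Arguments.
Unset Strict Implicit.
Unset Printing Implicit Defensive.

Lemma mem_perm_imset (T : finType) (s : {perm T}) (A : {pred T}) (x : T) :
  (x \in [set s i | i in A]) = ((s^-1)%g x \in A).
Proof. by rewrite -{1}(permKV s x) mem_imset //; exact: perm_inj. Qed.

Section IndepPairs.

Variables (T : nat) (S : 'I_T.+1 -> {set 'I_T.+1}).
Local Notation tm := 'I_T.+1.

Lemma indep_pairs_rank (r : tm -> nat) (A : {set tm}) (F : tm -> {set tm}) :
    injective r ->
    {in A, forall q, {subset S q <= [pred x | r x < r q]}} ->
    {in A, forall s, F s = [set q in A | (r q < r s) && (q \notin S s)]} ->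
  [set [set s; q] | s in A, q in F s] = indep_pairs S A.
Proof.
move=> r_inj S_below F_def; apply/setP => P.
apply/imset2P/imset2P => [[s q As] | [s q As]].
  rewrite F_def // inE => /and3P[Aq lt_qs qSs] ->.
  exists s q => //; rewrite !inE Aq qSs andbT /=.
  apply/andP; split; first by apply: contraTneq lt_qs => ->; rewrite ltnn.
  by apply: contraL lt_qs => /(S_below q Aq); rewrite inE -leqNgt => /ltnW.
rewrite !inE => /and3P[Aq /andP[neq_qs sSq] qSs] ->.
case: (ltngtP (r q) (r s)) => [lt_qs | lt_sq | /r_inj eq_qs].
- by exists s q => //; rewrite F_def // inE Aq lt_qs.
- by exists q s; rewrite 1?setUC // F_def // inE As lt_sq.
- by rewrite eq_qs eqxx in neq_qs.
Qed.

Hypothesis S_sub : forall t : tm, 1 <= t -> S t \subset [set q : tm | 1 <= q < t].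

Lemma mem_S (t x : tm) : 1 <= t -> x \in S t -> (1 <= x) && (x < t).
Proof. by move=> t_gt0 /(subsetP (S_sub t_gt0)); rewrite inE. Qed.

Lemma Dset_indep (t : tm) : Dset S t = indep_pairs S (upto T t).
Proof.
apply: (indep_pairs_rank val_inj) => [q | s].
  by rewrite inE => /andP[q_gt0 _] x /(mem_S q_gt0) /andP[].
rewrite inE => /andP[_ le_st]; apply/setP => q; rewrite !inE /=.
have [lt_qs | _] := ltnP q s; last by rewrite !(andbF, andFb).
by rewrite (leq_trans (ltnW lt_qs) le_st) andbT.
Qed.

Variable sigma : {perm tm}.
Hypotheses (sigma0 : perm_of_1T sigma) (S_arr : arrival_order S sigma).
Local Notation rank x := (nat_of_ord ((sigma^-1)%g x)).

Lemma mem_S_rank (t x : tm) : 1 <= t -> (x \in S t) = (1 <= rank x <= #|S t|).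
Proof. by move=> t_gt0; rewrite {1}(S_arr t_gt0) mem_perm_imset inE. Qed.

Lemma mem_Rset (s x : tm) : (x \in Rset sigma s) = (1 <= rank x < rank s).
Proof. by rewrite mem_perm_imset inE. Qed.

Lemma permV_ord0 : (sigma^-1)%g ord0 = ord0.
Proof. by rewrite -{1}sigma0 permK. Qed.

Lemma rank_gt0 (x : tm) : (0 < rank x) = (0 < x).
Proof.
rewrite !lt0n -[0]/(nat_of_ord (@ord0 T)) !val_eqE.
by rewrite -{1}permV_ord0 (inj_eq perm_inj).
Qed.

Lemma mem_S_rank_lt (q x : tm) : 1 <= q -> x \in S q -> rank x < rank q.
Proof.
move=> q_gt0 xSq; have q_notin_Sq : q \notin S q.
  by apply/negP => /(mem_S q_gt0) /andP[_]; rewrite ltnn.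
rewrite ltnNge; apply: contra q_notin_Sq => le_qx.
rewrite mem_S_rank // rank_gt0 q_gt0 (leq_trans le_qx) //.
by move: xSq; rewrite mem_S_rank // => /andP[].
Qed.

Lemma Bset_indep (t : tm) : 1 <= t -> Bset S sigma t = indep_pairs S (S t).
Proof.
move=> t_gt0; have r_inj : injective (fun x => rank x).
  by move=> x y /val_inj /perm_inj.
apply: (indep_pairs_rank r_inj) => [q /(mem_S t_gt0) /andP[q_gt0 _] x | s].
  exact: mem_S_rank_lt.
rewrite mem_S_rank // => /andP[_ le_s]; apply/setP => q.
rewrite !inE mem_Rset (mem_S_rank _ t_gt0).
have [lt_qs | _] := ltnP (rank q) (rank s); last by rewrite !(andbF, andFb).
by rewrite (leq_trans (ltnW lt_qs) le_s) !(andbT, andTb) andbC.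
Qed.

End IndepPairs.

Theorem proposition9 (T : nat) (S : 'I_T.+1 -> {set 'I_T.+1})
  (sigma : {perm 'I_T.+1})
  (hS : forall t : 'I_T.+1, 1 <= t -> S t \subset [set q : 'I_T.+1 | 1 <= q < t])
  (hmono : forall t t' : 'I_T.+1, 1 <= t -> t'= t.+1 :> nat -> S t \subset S t')
  (hsigma : perm_of_1T sigma)
  (harr : arrival_order S sigma) :
  forall t : 'I_T.+1, 1 <= t ->
    Dset S t = indep_pairs S (upto T t) /\
    Bset S sigma t = indep_pairs S (S t).
Proof.
by move=> t t_gt0; split; [exact: Dset_indep | exact: Bset_indep].
Qed.
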